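(* Let $D\ge1$, let $Q_D$ be the $D$-dimensional hypercube on $X=\{0,1\}^D$ with adjacency matrix $A$, and let $E_0V$ be the eigenspace of $A$ in $V=\mathbb{R}^X$ for the eigenvalue $D$. Then $BE_0V=0$ for every antisymmetric $A$-like matrix $B$.
   Context: $Q_D$ is the graph with vertex set $X=\{0,1\}^D$, two vertices adjacent iff they differ in exactly one coordinate. Matrices are real with rows and columns indexed by $X$ and act on $V=\mathbb{R}^X$. A matrix $B$ is $A$-like if $BA=AB$ and $B_{xy}=0$ for all $x,y\in X$ that are neither equal nor adjacent; it is antisymmetric if $B^t=-B$. *)

From mathcomp Require Import all_boot all_order all_algebra.
From mathcomp Require Import reals.
Set Implicit Arguments. Unset Strict Implicit. Unset Printing Implicit Defensive.
Import Order.TTheory GRing.Theory Num.Theory.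
Local Open Scope ring_scope.

Definition cube (D : nat) : finType := {ffun 'I_D -> bool}.

Definition hdist (D : nat) (x y : cube D) : nat := #|[set i | x i != y i]|.

Definition cube_adj (D : nat) (x y : cube D) : bool := hdist x y == 1%N.

Definition cmat (R : realType) (D : nat) := cube D -> cube D -> R.
Definition cvec (R : realType) (D : nat) := cube D -> R.

Definition adjA (R : realType) (D : nat) : cmat R D :=
  fun x y => if cube_adj x y then 1 else 0.

Definition cmul (R : realType) (D : nat) (M N : cmat R D) : cmat R D :=
  fun x z => \sum_(y : cube D) M x y * N y z.

Definition capply (R : realType) (D : nat) (M : cmat R D) (v : cvec R D) : cvec R D :=
  fun x => \sum_(y : cube D) M x y * v y.

Arguments adjA : clear implicits.
Arguments cmul {R D} M N x z.
Arguments capply {R D} M v x.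

Definition A_like (R : realType) (D : nat) (B : cmat R D) : Prop :=
  cmul B (adjA R D) = cmul (adjA R D) B /\
  forall x y : cube D, x != y -> ~~ cube_adj x y -> B x y = 0.

Definition antisym (R : realType) (D : nat) (B : cmat R D) : Prop :=
  forall x y : cube D, B y x = - B x y.

Arguments A_like {R D} B.
Arguments antisym {R D} B.

Definition in_E0 (R : realType) (D : nat) (v : cvec R D) : Prop :=
  capply (adjA R D) v = fun x => D%:R * v x.
Arguments in_E0 {R D} v.

From mathcomp Require Import all_boot all_order all_algebra.
From mathcomp Require Import boolp reals lra.
Set Implicit Arguments. Unset Strict Implicit. Unset Printing Implicit Defensive.
Import Order.TTheory GRing.Theory Num.Theory.
Local Open Scope ring_scope.

(* The Dirichlet energy identity  sum_{x,i} (w x - w x^i)^2 = 2 <w, (D - A) w>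
   shows that a D-eigenvector of A is constant along every edge of Q_D.  So
   for v in E_0 V and u := B v, which lies in E_0 V again because B commutes
   with A, the products u x v y and u y v x agree on the support of B (edges
   and the diagonal).  Hence the form sum_{x,y} B x y u x v y is symmetric,
   while antisymmetry of B makes it alternate: it vanishes.  But this form is
   <u, B v> = |u|^2, so u = 0. *)

Definition flip (D : nat) (x : cube D) (i : 'I_D) : cube D :=
  [ffun j => if j == i then ~~ x j else x j].

Lemma flipK D i : involutive (fun x : cube D => flip x i).
Proof.
by move=> x; apply/ffunP => j; rewrite !ffunE; case: eqP => // _; case: (x j).
Qed.

Lemma flip_inj D i : injective (fun x : cube D => flip x i).
Proof. exact: inv_inj (@flipK D i). Qed.

Lemma eq_flip_diff D (x y : cube D) i :
  (y == flip x i) = ([set j | x j != y j] == [set i]).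
Proof.
apply/eqP/eqP => [->|/setP diff_xy].
  by apply/setP => j; rewrite !inE ffunE; case: (j == i); case: (x j).
apply/ffunP => j; rewrite ffunE; move: (diff_xy j); rewrite !inE.
by case: (j == i); case: (x j); case: (y j).
Qed.

Lemma cube_adjE D (x y : cube D) : cube_adj x y = (\sum_i (y == flip x i))%N :> nat.
Proof.
under eq_bigr do rewrite eq_flip_diff.
rewrite /cube_adj /hdist; case: (boolP (_ == 1%N)) => [/cards1P[i0 ->]|not1].
  rewrite (bigD1 i0) //= eqxx big1 //= => i ne_i.
  have /negbTE -> // : [set i0] != [set i].
  by apply/eqP => /setP/(_ i); rewrite !inE eqxx (negbTE ne_i).
by rewrite big1 // => i; case: eqP => // diff_xy; rewrite diff_xy cards1 in not1.
Qed.

Lemma cube_adj_flip D (x y : cube D) : cube_adj x y -> exists i, y = flip x i.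
Proof.
rewrite /cube_adj /hdist => /cards1P[i diff_xy].
by exists i; apply/eqP; rewrite eq_flip_diff diff_xy.
Qed.

Section AdjacencyAction.
Variables (R : realType) (D : nat).

Lemma capply_adjA (w : cvec R D) x : capply (adjA R D) w x = \sum_i w (flip x i).
Proof.
have pick_flip i : w (flip x i) = \sum_y (y == flip x i)%:R * w y.
  rewrite (bigD1 (flip x i)) //= eqxx mul1r big1 ?addr0 // => y /negbTE->.
  by rewrite mul0r.
under [RHS]eq_bigr do rewrite pick_flip.
rewrite exchange_big; apply: eq_bigr => y _.
by rewrite -mulr_suml -natr_sum -cube_adjE /adjA; case: cube_adj.
Qed.

Lemma sum_flip (f : cube D -> R) i : \sum_x f (flip x i) = \sum_x f x.
Proof. by rewrite [RHS](reindex_inj (@flip_inj D i)). Qed.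

Lemma cube_dirichlet_energy (w : cvec R D) :
  \sum_x \sum_i (w x - w (flip x i)) ^+ 2
    = (D%:R * \sum_x w x ^+ 2 - \sum_x w x * capply (adjA R D) w x) *+ 2.
Proof.
have const_sq : \sum_x \sum_(i < D) w x ^+ 2 = D%:R * \sum_x w x ^+ 2.
  rewrite mulr_sumr; apply: eq_bigr => x _.
  by rewrite sumr_const card_ord mulr_natl.
have flip_sq : \sum_x \sum_(i < D) w (flip x i) ^+ 2 = D%:R * \sum_x w x ^+ 2.
  rewrite exchange_big; under eq_bigr do rewrite (sum_flip (fun y => w y ^+ 2)).
  by rewrite sumr_const card_ord mulr_natl.
have cross : \sum_x \sum_(i < D) w x * w (flip x i)
             = \sum_x w x * capply (adjA R D) w x.
  by apply: eq_bigr => x _; rewrite capply_adjA mulr_sumr.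
transitivity (\sum_x \sum_(i < D) w x ^+ 2 + \sum_x \sum_(i < D) w (flip x i) ^+ 2
              - (\sum_x \sum_(i < D) w x * w (flip x i)) *+ 2).
  rewrite -sumrMnl -big_split -sumrB; apply: eq_bigr => x _.
  rewrite -sumrMnl -big_split -sumrB; apply: eq_bigr => i _.
  by rewrite sqrrB addrAC.
by rewrite const_sq flip_sq cross mulrnBl mulr2n.
Qed.

Lemma sum_sqr_eq0 (I : finType) (f : I -> R) :
  \sum_i f i ^+ 2 = 0 -> forall i, f i = 0.
Proof.
move/psumr_eq0P => sq0 i; apply/eqP; rewrite -sqrf_eq0 sq0 // => j _.
exact: sqr_ge0.
Qed.

Lemma E0_flip (w : cvec R D) : in_E0 w -> forall x i, w (flip x i) = w x.
Proof.
move=> w_E0 x i.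
have energy0 : \sum_x \sum_i (w x - w (flip x i)) ^+ 2 = 0.
  rewrite cube_dirichlet_energy w_E0.
  under [X in _ - X]eq_bigr do rewrite mulrCA -expr2.
  by rewrite -mulr_sumr subrr mul0rn.
have row0 y : \sum_i (w y - w (flip y i)) ^+ 2 = 0.
  move/psumr_eq0P: energy0 => -> // z _.
  by apply: sumr_ge0 => j _; apply: sqr_ge0.
by apply/esym/eqP; rewrite -subr_eq0; apply/eqP/(sum_sqr_eq0 (row0 x)).
Qed.

End AdjacencyAction.

Lemma capply_cmul (R : realType) D (M N : cmat R D) (v : cvec R D) :
  capply M (capply N v) = capply (cmul M N) v.
Proof.
apply: funext => x; rewrite /capply /cmul.
under eq_bigr do rewrite mulr_sumr.
rewrite exchange_big; apply: eq_bigr => z _.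
by rewrite mulr_suml; apply: eq_bigr => y _; rewrite mulrA.
Qed.

Section ALike.
Variables (R : realType) (D : nat) (B : cmat R D).
Hypothesis B_Alike : A_like B.

Lemma A_like_E0 (v : cvec R D) : in_E0 v -> in_E0 (capply B v).
Proof.
rewrite /in_E0 capply_cmul -(proj1 B_Alike) -capply_cmul => ->.
apply: funext => x; rewrite /capply mulr_sumr.
by apply: eq_bigr => y _; rewrite mulrCA.
Qed.

Lemma A_like_E0_swap (u v : cvec R D) : in_E0 u -> in_E0 v ->
  forall x y, B x y * (u y * v x) = B x y * (u x * v y).
Proof.
move=> u_E0 v_E0 x y; have [->//|ne_xy] := eqVneq x y.
have [/cube_adj_flip[i ->]|nadj] := boolP (cube_adj x y).
  by rewrite (E0_flip u_E0) (E0_flip v_E0).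
by rewrite (proj2 B_Alike x y ne_xy nadj) !mul0r.
Qed.

End ALike.

Lemma antisym_form_eq0 (R : realType) D (B : cmat R D) (u v : cvec R D) :
  antisym B -> (forall x y, B x y * (u y * v x) = B x y * (u x * v y)) ->
  \sum_x \sum_y B x y * (u x * v y) = 0.
Proof.
move=> B_anti swap; set S := \sum_x _.
suff : S = - S by lra.
rewrite {1}/S exchange_big /= /S -sumrN; apply: eq_bigr => y _.
rewrite -sumrN; apply: eq_bigr => x _.
by rewrite [B y x]B_anti mulNr opprK swap.
Qed.

Theorem lemma9p1 (R : realType) (D : nat) (hD : (1 <= D)%N)
  (B : cmat R D) (hB : A_like B) (hBa : antisym B)
  (v : cvec R D) (hv : in_E0 v) :
  capply B v = fun _ => 0.
Proof.
set u := capply B v.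
have u_E0 : in_E0 u := A_like_E0 hB hv.
have norm_u : \sum_x u x ^+ 2 = \sum_x \sum_y B x y * (u x * v y).
  apply: eq_bigr => x _; rewrite expr2 {2}/u /capply mulr_sumr.
  by apply: eq_bigr => y _; rewrite mulrCA.
rewrite antisym_form_eq0 // in norm_u; last exact: A_like_E0_swap.
exact: funext (sum_sqr_eq0 norm_u).
Qed.
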